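(* For $(p,q,r,s)$ define $$\mathcal{J}_1=\frac{(p^2+s^2)qr+\beta(p+s)(q^2+r^2+ps)+\beta^2qr}{pqrs},$$ $$\mathcal{J}_2=\frac{pr^2(q+r+s)+sq^2(p+q+r)+ps(pr+ps+qs)+\beta qr(q+r)}{pqrs},$$ $$\mathcal{J}_3=\frac{(ps+q^2+r^2)(pr^2+ps^2+q^2s+\beta qr)(pr^2+p^2s+q^2s+\beta qr)}{p^2q^2r^2s^2}.$$ Then for every $\beta\in\mathbb{Z}\setminus\{0\}$ and every $(\lambda_1:\lambda_2:\lambda_3)\in\mathbb{P}^2$, the Diophantine equation $$\lambda_1\mathcal{J}_1+\lambda_2\mathcal{J}_2+\lambda_3\mathcal{J}_3=\lambda_1(\beta^2+6\beta+2)+\lambda_2(2\beta+9)+3\lambda_3(\beta+3)^2$$ has infinitely many integer solutions $(p,q,r,s)$. *)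

From mathcomp Require Import all_boot all_order all_algebra.
Set Implicit Arguments. Unset Strict Implicit. Unset Printing Implicit Defensive.
Import Order.TTheory GRing.Theory Num.Theory.
Local Open Scope ring_scope.

Section Js.
Variable R : numFieldType.
Variables (beta p q r s : int).
Let b : R := beta%:~R.
Let P : R := p%:~R.
Let Q : R := q%:~R.
Let Rr : R := r%:~R.
Let S : R := s%:~R.

Definition J1 : R :=
  ((P^+2 + S^+2) * Q * Rr + b * (P + S) * (Q^+2 + Rr^+2 + P * S)
    + b^+2 * Q * Rr) / (P * Q * Rr * S).

Definition J2 : R :=
  (P * Rr^+2 * (Q + Rr + S) + S * Q^+2 * (P + Q + Rr)
    + P * S * (P * Rr + P * S + Q * S) + b * Q * Rr * (Q + Rr))
  / (P * Q * Rr * S).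

Definition J3 : R :=
  ((P * S + Q^+2 + Rr^+2) * (P * Rr^+2 + P * S^+2 + Q^+2 * S + b * Q * Rr)
    * (P * Rr^+2 + P^+2 * S + Q^+2 * S + b * Q * Rr))
  / (P^+2 * Q^+2 * Rr^+2 * S^+2).
End Js.

(* (p,q,r,s) is an integer solution of the equation (with p q r s nonzero so
   that the J_i are defined). *)
Definition is_solution (R : numFieldType) (beta : int) (l1 l2 l3 : R)
  (x : int * int * int * int) : Prop :=
  let: (p, q, r, s) := x in
  [/\ p != 0, q != 0, r != 0 & s != 0] /\
  l1 * J1 R beta p q r s + l2 * J2 R beta p q r s + l3 * J3 R beta p q r s
  = l1 * (beta%:~R ^+ 2 + 6 * beta%:~R + 2)
    + l2 * (2 * beta%:~R + 9)
    + 3 * l3 * (beta%:~R + 3) ^+ 2.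

From mathcomp Require Import all_boot all_order all_algebra.
From mathcomp Require Import ring zify.
Import Order.TTheory GRing.Theory Num.Theory.
Local Open Scope ring_scope.

(* The J_i are first integrals of the Somos-4 map
   (p, q, r, s) |-> (q, r, s, (q s + beta r) / p),
   and (1, 1, 1, 1) takes the prescribed values, so every window of four
   consecutive terms of the Somos-4 sequence
   x_(n+4) x_n = x_(n+1) x_(n+3) + beta x_(n+2),  x_0 = ... = x_3 = 1,
   solves the equation for every choice of the lambda_i.  The terms are
   integers: along the orbit the defect x_(n+6) + x_n - J_1 x_(n+3) is
   3-periodic, so the sequence interleaves three integer solutions of
   y_(m+2) = J_1 y_(m+1) - y_m + c_j.  These grow without bound because
   |J_1| = |beta^2 + 6 beta + 2| >= 3, except for beta = -6 (J_1 = 2, quadratic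
   growth) and beta = -3 (one interleaved sequence is constant).  For
   beta = -1 the orbit of (1, 1, 1, 1) reaches x_4 = beta + 1 = 0, and we start
   from the solution (-1, 1, 4, 5) instead. *)

Definition somos4_at {R : pzRingType} (b : R) (x : nat -> R) (n : nat) : Prop :=
  x n.+4 * x n = x n.+1 * x n.+3 + b * x n.+2.

Lemma somos4_at_intr (R : numDomainType) (b : int) (z : nat -> int) n :
  somos4_at (b%:~R : R) (fun k => (z k)%:~R) n <-> somos4_at b z n.
Proof. by rewrite /somos4_at -!intrM -intrD; split => [/intr_inj | ->]. Qed.

Section SomosInvariants.
Variables (R : fieldType) (b : R).
Implicit Types (x : nat -> R) (p q r s t : R).

Lemma somos4_next x n : x n != 0 -> somos4_at b x n ->
  x n.+4 = (x n.+1 * x n.+3 + b * x n.+2) / x n.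
Proof. by move=> xn_neq0 <-; rewrite mulfK. Qed.

Lemma somos4_prev x n : x n.+4 != 0 -> somos4_at b x n ->
  x n = (x n.+1 * x n.+3 + b * x n.+2) / x n.+4.
Proof. by move=> xn4_neq0 <-; rewrite mulrC mulKf. Qed.

Definition somosJ1 p q r s : R :=
  ((p^+2 + s^+2) * q * r + b * (p + s) * (q^+2 + r^+2 + p * s)
    + b^+2 * q * r) / (p * q * r * s).

Definition somosJ2 p q r s : R :=
  (p * r^+2 * (q + r + s) + s * q^+2 * (p + q + r)
    + p * s * (p * r + p * s + q * s) + b * q * r * (q + r))
  / (p * q * r * s).

Definition somosJ3 p q r s : R :=
  ((p * s + q^+2 + r^+2) * (p * r^+2 + p * s^+2 + q^+2 * s + b * q * r)
    * (p * r^+2 + p^+2 * s + q^+2 * s + b * q * r))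
  / (p^+2 * q^+2 * r^+2 * s^+2).

Definition somosJ x n : R * R * R :=
  (somosJ1 (x n) (x n.+1) (x n.+2) (x n.+3),
   somosJ2 (x n) (x n.+1) (x n.+2) (x n.+3),
   somosJ3 (x n) (x n.+1) (x n.+2) (x n.+3)).

Lemma somosJ_step x n : (forall k, x k != 0) -> somos4_at b x n ->
  somosJ x n.+1 = somosJ x n.
Proof.
move=> x_neq0 Sn.
have num_neq0 : x n.+1 * x n.+3 + b * x n.+2 != 0 by rewrite -Sn mulf_neq0.
rewrite /somosJ /somosJ1 /somosJ2 /somosJ3 (somos4_next _ _ (x_neq0 n) Sn).
by congr (_, _, _); field; rewrite ?x_neq0 ?num_neq0.
Qed.

Lemma somosJ_const x n : (forall k, x k != 0) ->
  (forall k, (k < n)%N -> somos4_at b x k) -> somosJ x n = somosJ x 0.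
Proof.
move=> x_neq0; elim: n => // n IH S.
rewrite somosJ_step //; last exact: S.
by apply: IH => k /ltnW; exact: S.
Qed.

Definition somos_defect x t n : R := x (6 + n)%N + x n - t * x (3 + n)%N.

(* Solving the first five relations for x_0, x_1 and x_6, x_7, x_8 turns this
   into a rational identity in x_2, ..., x_5 with monomial denominators. *)
Lemma somos4_at5 x (J := somosJ1 (x 2) (x 3) (x 4) (x 5)) :
  (forall k, x k != 0) -> (forall k, (k < 5)%N -> somos4_at b x k) ->
  somos_defect x J 3 = somos_defect x J 0 -> somos4_at b x 5.
Proof.
move=> x_neq0 S defect.
have x9E : x 9 = x 6 + x 0 - J * x 3 - x 3 + J * x 6.
  by move: defect; rewrite /somos_defect /= => <-; ring.
rewrite /somos4_at x9E /J /somosJ1.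
rewrite (somos4_next _ _ _ (S 4%N isT)) ?(somos4_next _ _ _ (S 3%N isT)) //.
rewrite (somos4_next _ _ _ (S 2%N isT)) ?(somos4_prev _ _ _ (S 0%N isT)) //.
rewrite (somos4_prev _ _ _ (S 1%N isT)) //.
by field; rewrite ?x_neq0.
Qed.

Lemma somos4_of_defect x t :
  (forall k, x k != 0) -> (forall k, (k < 5)%N -> somos4_at b x k) ->
  somosJ1 (x 0) (x 1) (x 2) (x 3) = t ->
  (forall n, somos_defect x t (3 + n) = somos_defect x t n) ->
  forall n, somos4_at b x n.
Proof.
move=> x_neq0 S04 Jt defect n; elim/ltn_ind: n => n IH.
have [/S04 //|n_ge5] := ltnP n 5.
rewrite -(subnKC n_ge5); set m := (n - 5)%N.
have Sm k : (k < 5 + m)%N -> somos4_at b x k by move=> lt_k; apply: IH; lia.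
pose y k := x (k + m)%N.
have Jy : somosJ1 (y 2) (y 3) (y 4) (y 5) = t.
  have S2m k : (k < 2 + m)%N -> somos4_at b x k by move=> lt_k; apply: Sm; lia.
  by have := somosJ_const x (2 + m)%N x_neq0 S2m; rewrite /somosJ => -[-> _ _].
apply: (somos4_at5 y) => [k | k lt_k5 | ]; first exact: x_neq0.
  by apply: Sm; rewrite ltn_add2r.
by rewrite Jy; exact: defect m.
Qed.

End SomosInvariants.

Fixpoint linrec2 (t c y0 y1 : int) (m : nat) : int :=
  if m is m'.+1 then linrec2 t c y1 (t * y1 - y0 + c) m' else y0.

Lemma linrec2_rec t c y0 y1 m :
  linrec2 t c y0 y1 m.+2 = t * linrec2 t c y0 y1 m.+1 - linrec2 t c y0 y1 m + c.
Proof. by elim: m y0 y1 => [|m IH] y0 y1 //; apply: IH. Qed.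

Lemma linrec2_fixpoint t c v m : t * v - v + c = v -> linrec2 t c v v m = v.
Proof. by move=> fix_v; elim: m => //= m; rewrite fix_v. Qed.

Definition unbounded (y : nat -> int) : Prop :=
  forall M : nat, exists n, (M < `|y n|)%N.

Lemma neq0_unbounded_of_growth (y : nat -> int) m0 :
  all (fun m => y m != 0) (iota 0 m0.+1) ->
  (forall k, k%:Z < `|y (k + m0).+1|) ->
  (forall m, y m != 0) /\ unbounded y.
Proof.
move=> /allP y_neq0 grow; split => [m | M].
  have [le_m_m0 | lt_m0_m] := leqP m m0; first by apply: y_neq0; rewrite mem_iota.
  have := grow (m - m0.+1)%N; rewrite (_ : (m - m0.+1 + m0).+1 = m)%N; last lia.
  by apply: contraTneq => ->; rewrite normr0.
by exists (M + m0).+1; have := grow M; lia.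
Qed.

Definition escapes (y : nat -> int) (c : int) (m0 : nat) : bool :=
  all (fun m => y m != 0) (iota 0 m0.+1) && (`|y m0| + `|c| + 1 <= `|y m0.+1|).

Section SecondOrderGrowth.
Context {y : nat -> int} {t c : int}.
Hypothesis y_rec : forall m, y m.+2 = t * y m.+1 - y m + c.

(* The gap |y (m+1)| - |y m| > |c| propagates because
   |y (m+2)| >= 3 |y (m+1)| - |y m| - |c|. *)
Lemma escapes_hyperbolic m0 : 3 <= `|t| -> escapes y c m0 ->
  (forall m, y m != 0) /\ unbounded y.
Proof.
move=> t_ge3 /andP[y_neq0 gap0]; apply: neq0_unbounded_of_growth y_neq0 _.
have gap k : `|y (k + m0)| + `|c| + 1 <= `|y (k + m0).+1|.
  elim: k => // k IH; rewrite addSn y_rec.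
  have : `|t * y (k + m0).+1| <= `|t * y (k + m0).+1 - y (k + m0) + c|
           + `|y (k + m0)| + `|c| by lia.
  by rewrite normrM; nia.
elim=> [|k IH]; first by have := gap 0%N; lia.
by have := gap k.+1; rewrite !addSn in IH *; lia.
Qed.

Lemma escapes_parabolic m0 s : t = 2 -> s * s = 1 -> 0 <= s * c ->
  0 < s * (y m0.+1 - y m0) -> 0 < s * y m0.+1 ->
  all (fun m => y m != 0) (iota 0 m0.+1) ->
  (forall m, y m != 0) /\ unbounded y.
Proof.
move=> t2 s2 sc_ge0 slope0 pos0 y_neq0; apply: neq0_unbounded_of_growth y_neq0 _.
have slope k : 0 < s * (y (k + m0).+1 - y (k + m0)).
  by elim: k => // k IH; rewrite addSn y_rec t2; nia.
have pos k : k%:Z < s * y (k + m0).+1.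
  by elim: k => // k IH; have := slope k.+1; rewrite addSn in IH *; nia.
by move=> k; apply: lt_le_trans (pos k) _; nia.
Qed.

End SecondOrderGrowth.

Definition J_values (R : numFieldType) (b p q r s : int) : Prop :=
  [/\ J1 R b p q r s = b%:~R ^+ 2 + 6 * b%:~R + 2,
      J2 R b p q r s = 2 * b%:~R + 9
    & J3 R b p q r s = 3 * (b%:~R + 3) ^+ 2].

Lemma is_solution_of_J_values (R : numFieldType) b (l1 l2 l3 : R) p q r s :
  [/\ p != 0, q != 0, r != 0 & s != 0] -> J_values R b p q r s ->
  is_solution b l1 l2 l3 (p, q, r, s).
Proof. by move=> pqrs_neq0 [J1v J2v J3v]; split; rewrite // J1v J2v J3v; ring. Qed.

Lemma J_values_somos4 (R : numFieldType) (b : int) (z : nat -> int) :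
  (forall n, z n != 0) -> (forall n, somos4_at b z n) ->
  J_values R b (z 0) (z 1) (z 2) (z 3) ->
  forall n, J_values R b (z n) (z n.+1) (z n.+2) (z n.+3).
Proof.
move=> z_neq0 S [J1z J2z J3z] n.
pose x k : R := (z k)%:~R.
have : somosJ R b%:~R x n = somosJ R b%:~R x 0.
  apply: somosJ_const => [k | k _]; first by rewrite intr_eq0.
  exact/somos4_at_intr.
by rewrite /somosJ => -[Jn1 Jn2 Jn3]; split; [rewrite -J1z | rewrite -J2z | rewrite -J3z].
Qed.

Lemma unbounded_windows_infinite (P : int * int * int * int -> Prop) (z : nat -> int) :
  unbounded z -> (forall n, P (z n, z n.+1, z n.+2, z n.+3)) ->
  ~ exists sol : seq (int * int * int * int), forall x, P x -> x \in sol.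
Proof.
move=> z_unb Pz [sol sol_all].
have [n] := z_unb (\max_(x <- sol) `|x.1.1.1|)%N.
by rewrite ltnNge (leq_bigmax_seq (F := fun x => `|x.1.1.1|%N) _ (sol_all _ (Pz n))).
Qed.

Definition somosT (b : int) : int := b ^+ 2 + 6 * b + 2.

(* On the orbits used below, somosC b j is the value of the 3-periodic defect
   x_(n+6) + x_n - somosT b * x_(n+3) at n = j mod 3. *)
Definition somosC (b : int) (j : nat) : int :=
  if j == 0%N then - (3 * b) else - (b * (b + 3)).

Definition somos_residue (b : int) (a : seq int) (j : nat) : nat -> int :=
  linrec2 (somosT b) (somosC b j) a`_j a`_(j + 3).

Definition somos_seq (b : int) (a : seq int) (n : nat) : int :=
  somos_residue b a (n %% 3) (n %/ 3).

Section SomosSeq.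
Variables (b : int) (a : seq int).
Local Notation z := (somos_seq b a).

Lemma somos_residue_rec j m :
  somos_residue b a j m.+2
  = somosT b * somos_residue b a j m.+1 - somos_residue b a j m + somosC b j.
Proof. exact: linrec2_rec. Qed.

Lemma somos_seq_rec n :
  z (6 + n)%N = somosT b * z (3 + n)%N - z n + somosC b (n %% 3).
Proof.
rewrite /somos_seq (_ : (6 + n) %% 3 = n %% 3)%N; last lia.
rewrite (_ : (3 + n) %% 3 = n %% 3)%N; last lia.
rewrite (_ : (6 + n) %/ 3 = (n %/ 3).+2)%N; last lia.
rewrite (_ : (3 + n) %/ 3 = (n %/ 3).+1)%N; last lia.
exact: somos_residue_rec.
Qed.

Lemma somos_seq_neq0 :
  (forall j, (j < 3)%N -> forall m, somos_residue b a j m != 0) ->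
  forall n, z n != 0.
Proof. by move=> res_neq0 n; apply: res_neq0; rewrite ltn_mod. Qed.

Lemma somos_seq_unbounded j : (j < 3)%N ->
  unbounded (somos_residue b a j) -> unbounded z.
Proof.
move=> lt_j3 res_unb M; have [m lt_M] := res_unb M; exists (m * 3 + j)%N.
by rewrite /somos_seq modnMDl divnMDl // modn_small // divn_small ?addn0.
Qed.

Lemma somos_seq_hyperbolic m0 : 3 <= `|somosT b| ->
  all (fun j => escapes (somos_residue b a j) (somosC b j) m0) (iota 0 3) ->
  (forall n, z n != 0) /\ unbounded z.
Proof.
move=> T_ge3 /allP esc.
have res j : (j < 3)%N ->
    (forall m, somos_residue b a j m != 0) /\ unbounded (somos_residue b a j).
  move=> lt_j3; apply: (escapes_hyperbolic (somos_residue_rec j) m0 T_ge3).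
  by apply: esc; rewrite mem_iota.
split; first by apply: somos_seq_neq0 => j /res[].
exact: (somos_seq_unbounded 0 isT (res 0%N isT).2).
Qed.

Lemma somos_seq_somos4 :
  (forall n, z n != 0) -> (forall k, (k < 5)%N -> somos4_at b z k) ->
  J1 rat b (z 0) (z 1) (z 2) (z 3) = b%:~R ^+ 2 + 6 * b%:~R + 2 ->
  forall n, somos4_at b z n.
Proof.
move=> z_neq0 S04 J1z n; apply/(somos4_at_intr rat).
apply: (somos4_of_defect _ _ _ (somosT b)%:~R) => [k | k /S04 | | m].
- by rewrite intr_eq0.
- by move/(somos4_at_intr rat).
- by rewrite [LHS]J1z /somosT; ring.
- have defectE k : somos_defect rat (fun n => (z n)%:~R : rat) (somosT b)%:~R k
                   = (somosC b (k %% 3))%:~R.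
    by rewrite /somos_defect somos_seq_rec; ring.
  by rewrite !defectE modnDl.
Qed.

(* The integrality argument runs in rat, the statement in an arbitrary R. *)
Lemma somos_seq_infinite {R : numFieldType} {l1 l2 l3 : R} :
  (forall n, z n != 0) -> unbounded z ->
  (forall k, (k < 5)%N -> somos4_at b z k) ->
  (forall F : numFieldType, J_values F b a`_0 a`_1 a`_2 a`_3) ->
  ~ exists sol : seq (int * int * int * int),
      forall x, is_solution b l1 l2 l3 x -> x \in sol.
Proof.
move=> z_neq0 z_unb S04 J0; have [J1a _ _] := J0 rat.
have S := somos_seq_somos4 z_neq0 S04 J1a.
apply: unbounded_windows_infinite z_unb _ => n.
apply: is_solution_of_J_values; first by rewrite !z_neq0.
exact: J_values_somos4 z_neq0 S (J0 R) n.
Qed.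

End SomosSeq.

Definition somos_start (b : int) : seq int := [:: 1; 1; 1; 1; b + 1; 2 * b + 1].

Lemma somos_start_J_values (R : numFieldType) b : J_values R b 1 1 1 1.
Proof. by split; rewrite /J1 /J2 /J3; field. Qed.

Lemma somos_start_base b k : (k < 5)%N ->
  somos4_at b (somos_seq b (somos_start b)) k.
Proof.
pose T := somosT b; pose C := somosC b.
pose head := [:: 1; 1; 1; 1; b + 1; 2 * b + 1; T * 1 - 1 + C 0%N;
                 T * (b + 1) - 1 + C 1%N; T * (2 * b + 1) - 1 + C 2%N].
have head_somos4 : (k < 5)%N -> somos4_at b (nth 0 head) k.
  case: k => [|[|[|[|[|]]]]] // _;
    by rewrite /somos4_at /= /T /C /somosT /somosC /=; ring.
(* the first nine terms of the sequence are, by computation, those of head *)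
by case: k head_somos4 => [|[|[|[|[|]]]]] // S _; exact: S.
Qed.

Lemma somos_start_escapes (b : int) : b != 0 -> b != -1 ->
  (forall n, somos_seq b (somos_start b) n != 0)
  /\ unbounded (somos_seq b (somos_start b)).
Proof.
move=> b_neq0 b_neq_m1.
have [far | near] : (1 <= b) || (b <= -7) \/ b \in [:: -2; -3; -4; -5; -6]
  by rewrite !inE; lia.
  apply: (somos_seq_hyperbolic _ _ 1); first by rewrite /somosT; nia.
  by rewrite /= /escapes /somos_residue /= /somosT /somosC /=; nia.
have : b \in [:: -2; -4; -5] \/ b = -3 \/ b = -6 by move: near; rewrite !inE; lia.
case=> [hyperbolic | [-> | ->]].
- move: hyperbolic; rewrite !inE => /or3P[] /eqP->;
    by apply: (somos_seq_hyperbolic _ _ 4); vm_compute.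
- pose y := somos_residue (-3) (somos_start (-3)).
  have res j : (0 < j < 3)%N -> (forall m, y j m != 0) /\ unbounded (y j).
    case: j => [|[|[|]]] // _;
      by apply: (escapes_hyperbolic (somos_residue_rec _ _ _) 4); vm_compute.
  split; last exact: (somos_seq_unbounded _ _ 1 isT (res 1%N isT).2).
  apply: somos_seq_neq0 => -[_ m | j lt_j3]; last exact: (res j.+1 lt_j3).1.
  by rewrite /somos_residue linrec2_fixpoint.
- pose y := somos_residue (-6) (somos_start (-6)).
  have res j : (j < 3)%N -> (forall m, y j m != 0) /\ unbounded (y j).
    case: j => [|[|[|]]] // _.
    + by apply: (escapes_parabolic (somos_residue_rec _ _ _) 1 1); vm_compute.
    + by apply: (escapes_parabolic (somos_residue_rec _ _ _) 0 (-1)); vm_compute.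
    + by apply: (escapes_parabolic (somos_residue_rec _ _ _) 0 (-1)); vm_compute.
  split; first by apply: somos_seq_neq0 => j /res[].
  exact: (somos_seq_unbounded _ _ 0 isT (res 0%N isT).2).
Qed.

Theorem corollary3p8 (R : numFieldType) (beta : int) (l1 l2 l3 : R) :
  beta != 0 -> [|| l1 != 0, l2 != 0 | l3 != 0] ->
  ~ (exists sol : seq (int * int * int * int),
       forall x, is_solution beta l1 l2 l3 x -> x \in sol).
Proof.
move=> beta_neq0 _.
have [->|beta_neq_m1] := eqVneq beta (-1).
  pose a : seq int := [:: -1; 1; 4; 5; -1; -9].
  have [z_neq0 z_unb] :
      (forall n, somos_seq (-1) a n != 0) /\ unbounded (somos_seq (-1) a).
    by apply: (somos_seq_hyperbolic _ _ 4); vm_compute.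
  apply: (somos_seq_infinite _ _ z_neq0 z_unb).
    by case=> [|[|[|[|[|]]]]] // _; vm_compute.
  by move=> F; split; rewrite /J1 /J2 /J3 /a /=; field.
have [z_neq0 z_unb] := somos_start_escapes _ beta_neq0 beta_neq_m1.
exact: (somos_seq_infinite _ _ z_neq0 z_unb (somos_start_base beta)
         (somos_start_J_values ^~ beta)).
Qed.
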